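(* Let $k\ge2$, $q_1,q_2$ positive integers, $m$ a real number, and $\gamma_2=\begin{pmatrix}a&b\\c&d\end{pmatrix}\in\Gamma_0(q_1q_2)$. If $\mathcal P_0\in\mathcal P(k;m,q_1)$, then the polynomial $\mathcal P_0|_{2-k}\gamma_2(x)=(cx+d)^{k-2}\mathcal P_0\!\left(\frac{ax+b}{cx+d}\right)$ also lies in $\mathcal P(k;m,q_1)$.
   Context: $\mathcal P(k;m,q)=\Big\{\sum_{n=0}^{k-2}a_nx^{k-n-2}\in\mathbb Q[x]:\ q^{n+1}a_n\in m\mathbb Z\text{ for all }n\Big\}$, where $m\mathbb Z=\{mt:t\in\mathbb Z\}$. *)

From HB Require Import structures.
From mathcomp Require Import all_boot all_order all_algebra.
From mathcomp Require Import reals.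
Set Implicit Arguments. Unset Strict Implicit. Unset Printing Implicit Defensive.
Import Order.TTheory GRing.Theory Num.Theory.
Local Open Scope ring_scope.

Definition in_mZ (R : realType) (m x : R) : Prop := exists t : int, x = m * t%:~R.

(* P(k; m, q): polynomials sum_{n=0}^{k-2} a_n x^{k-n-2} in Q[x]
   (i.e. degree <= k-2) with q^{n+1} a_n in m Z for all n.
   Here a_n is the coefficient of x^{k-2-n}, i.e. P`_(k-2-n). *)
Definition in_Pkmq (R : realType) (k : nat) (m : R) (q : nat) (P : {poly rat}) : Prop :=
  (size P <= k.-1)%N /\
  forall n : nat, (n <= k - 2)%N ->
    in_mZ m (ratr ((q%:R : rat) ^+ n.+1 * P`_(k - 2 - n))).

Definition inGamma0 (N : nat) (a b c d : int) : Prop :=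
  a * d - b * c = 1 /\ (N%:Z %| c)%Z.

(* Weight 2-k slash action on polynomials of degree <= k-2:
   (P|_{2-k} gamma)(x) = (cx+d)^{k-2} P((ax+b)/(cx+d))
                       = sum_i P_i (ax+b)^i (cx+d)^{k-2-i}. *)
Definition slash2k (k : nat) (a b c d : int) (P : {poly rat}) : {poly rat} :=
  \sum_(i < k.-1) P`_i *: (('X * (a%:~R)%:P + (b%:~R)%:P) ^+ i
                           * ('X * (c%:~R)%:P + (d%:~R)%:P) ^+ (k - 2 - i)).

(** Since [q1 q2] divides [c], write [c = c' q] with [q = q1]. For the
    integer polynomial [G = (a x + b q)^i (c' x + d)^l] one has
    [G(q x) = q^i (a x + b)^i (c x + d)^l], so the [j]-th coefficient of
    [(a x + b)^i (c x + d)^l] is [q^(j-i)] times an integer. In the [i]-th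
    summand of [P|_{2-k} gamma] the [(k-2-n)]-th coefficient is therefore
    [p_i q^(k-2-n-i) z], and multiplying by [q^(n+1)] gives
    [z q^(k-1-i) p_i], an integer multiple of an element of [m Z] by
    hypothesis. *)
From mathcomp Require Import all_boot all_order all_algebra.
From mathcomp Require Import reals.
From mathcomp Require Import ring zify.
Set Implicit Arguments. Unset Strict Implicit. Unset Printing Implicit Defensive.
Import Order.TTheory GRing.Theory Num.Theory.
Local Open Scope ring_scope.

Section IntegerMultiples.

Variables (R : realType) (m : R).

Lemma in_mZ0 : in_mZ m 0.
Proof. by exists 0; rewrite mulr0. Qed.

Lemma in_mZD x y : in_mZ m x -> in_mZ m y -> in_mZ m (x + y).
Proof. by move=> [s ->] [t ->]; exists (s + t); rewrite intrD mulrDr. Qed.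

Lemma in_mZ_sum I (r : seq I) (P : pred I) (F : I -> R) :
  (forall i, P i -> in_mZ m (F i)) -> in_mZ m (\sum_(i <- r | P i) F i).
Proof. by move=> mZF; apply: big_ind => //; [exact: in_mZ0 | exact: in_mZD]. Qed.

Lemma in_mZMz x (z : int) : in_mZ m x -> in_mZ m (x * z%:~R).
Proof. by move=> [t ->]; exists (t * z); rewrite intrM mulrA. Qed.

End IntegerMultiples.

Lemma coef_comp_scaleX (R : comNzRingType) (p : {poly R}) (r : R) j :
  (p \Po (r *: 'X))`_j = r ^+ j * p`_j.
Proof.
rewrite comp_polyE; under eq_bigr do rewrite exprZn scalerA.
rewrite coef_sumMXn; under eq_bigl do rewrite andTb.
rewrite (big_ord1_eq _ (fun i => p`_i * r ^+ i)) mulrC.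
by case: ltnP => // /(nth_default 0) ->; rewrite mulr0.
Qed.

Lemma coef_affine_exp_scaled (R : comNzRingType) (q : nat) (a b c d : int) i l j :
  exists z : int,
    q%:R ^+ i * (('X * (a%:~R)%:P + (b%:~R)%:P) ^+ i
                 * ('X * ((c * q)%:~R)%:P + (d%:~R)%:P) ^+ l)`_j
    = q%:R ^+ j * z%:~R :> R.
Proof.
pose G : {poly int} := ('X * a%:P + (b * q)%:P) ^+ i * ('X * c%:P + d%:P) ^+ l.
have G_scaled : map_poly intr G \Po (q%:R *: 'X) =
    q%:R ^+ i *: (('X * (a%:~R)%:P + (b%:~R)%:P) ^+ i
                  * ('X * ((c * q)%:~R)%:P + (d%:~R)%:P) ^+ l) :> {poly R}.
  rewrite /G !(rmorphM, rmorphXn, rmorphD) /= map_polyX !map_polyC /=.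
  rewrite !comp_polyX !comp_polyC -!mul_polyC polyC_exp.
  change (q%:~R : R) with (q%:R : R); set Q := (q%:R : R)%:P.
  have -> : Q * 'X * (a%:~R)%:P + (b%:~R)%:P * Q = Q * ('X * (a%:~R)%:P + (b%:~R)%:P).
    by ring.
  have -> : Q * 'X * (c%:~R)%:P + (d%:~R)%:P = 'X * ((c%:~R)%:P * Q) + (d%:~R)%:P.
    by ring.
  by rewrite exprMn -mulrA.
by exists G`_j; rewrite -coefZ -G_scaled coef_comp_scaleX coef_map.
Qed.

Lemma mulr_expf_shift (F : idomainType) (x u v : F) i j s t :
  x != 0 -> x ^+ i * u = x ^+ j * v -> (s + j = t + i)%N ->
  x ^+ s * u = x ^+ t * v.
Proof.
move=> x_neq0 eq_ij eq_st; apply: (mulfI (expf_neq0 i x_neq0)).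
by rewrite mulrCA eq_ij !mulrA -!exprD eq_st addnC.
Qed.

Lemma size_affine_exp (R : nzRingType) (u v : R) e :
  (size (('X * u%:P + v%:P) ^+ e)%R <= e.+1)%N.
Proof.
have size_affine : (size ('X * u%:P + v%:P)%R <= 2)%N.
  rewrite (leq_trans (size_polyD _ _)) // geq_max.
  rewrite (leq_trans (size_polyC_leq1 _)) // andbT.
  by rewrite (leq_trans (size_polyMleq _ _)) // size_polyX; have := size_polyC_leq1 u; lia.
by rewrite (leq_trans (size_poly_exp_leq _ _)) // ltnS; move: size_affine; nia.
Qed.

Lemma size_slash2k k a b c d P : (size (slash2k k a b c d P) <= k.-1)%N.
Proof.
rewrite (leq_trans (size_sum _ _ _)) //; apply/bigmax_leqP => i _.
rewrite (leq_trans (size_scale_leq _ _)) // (leq_trans (size_polyMleq _ _)) //.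
have := size_affine_exp (a%:~R : rat) (b%:~R) i.
have := size_affine_exp (c%:~R : rat) (d%:~R) (k - 2 - i).
have := ltn_ord i; move: (size _) (size _) => s2 s1; lia.
Qed.

Lemma slash2k_coef_in_mZ (R : realType) k (m : R) q (a b c d : int) P n :
  (0 < q)%N -> in_Pkmq k m q P -> (n <= k - 2)%N ->
  in_mZ m (ratr ((q%:R : rat) ^+ n.+1 * (slash2k k a b (c * q) d P)`_(k - 2 - n))).
Proof.
move=> q_gt0 [_ P_mZ] le_n_k.
rewrite coef_sum mulr_sumr rmorph_sum; apply: in_mZ_sum => i _; rewrite coefZ.
have le_i_k : (i <= k - 2)%N by have := ltn_ord i; lia.
have := P_mZ (k - 2 - i)%N (leq_subr _ _); rewrite subKn // => P_i_mZ.
have [z coef_z] := coef_affine_exp_scaled rat q a b c d i (k - 2 - i) (k - 2 - n).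
have q_neq0 : (q%:R : rat) != 0 by rewrite pnatr_eq0 -lt0n.
have exps : (n.+1 + (k - 2 - n) = (k - 2 - i).+1 + i)%N by lia.
rewrite mulrCA (mulr_expf_shift q_neq0 coef_z exps) mulrCA mulrA.
by rewrite rmorphM /= ratr_int; apply: in_mZMz.
Qed.

Theorem lemma6p2 (R : realType) (k q1 q2 : nat) (m : R) (a b c d : int)
  (P0 : {poly rat}) :
  (2 <= k)%N -> (0 < q1)%N -> (0 < q2)%N ->
  inGamma0 (q1 * q2) a b c d ->
  in_Pkmq k m q1 P0 ->
  in_Pkmq k m q1 (slash2k k a b c d P0).
Proof.
move=> _ q1_gt0 _ [_ /dvdzP [c' ->]] P0_in; split; first exact: size_slash2k.
have -> : c' * (q1 * q2)%N = c' * q2 * q1 by rewrite PoszM; ring.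
by move=> n le_n_k; apply: slash2k_coef_in_mZ.
Qed.
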